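(* There is an absolute constant $c'>0$ such that the following holds. Let $k\ge1$, let $V$ be the vertex set of $Dec_kC$, let $S\subseteq V$, and let $\sigma_i=|S\cap l_i|/|l_i|$ for $1\le i\le k+1$. Then for every $1\le i\le k$, $$|E(S,V\setminus S)\cap E(l_i,l_{i+1})|\ge c'\cdot 6\cdot|\sigma_i-\sigma_{i+1}|\cdot|l_i|.$$
   Context: Let $D$ be the bipartite graph with product vertices $m_1,\dots,m_7$, output vertices $c_1,c_2,c_3,c_4$, and edges $c_1m_1,c_1m_4,c_1m_5,c_1m_7$, $c_2m_3,c_2m_5$, $c_3m_2,c_3m_4$, $c_4m_1,c_4m_2,c_4m_3,c_4m_6$. These encode Strassen's formulas for $C_{11},C_{12},C_{21},C_{22}$ in terms of $M_1,\dots,M_7$. For $k\ge1$, $Dec_kC$ is the undirected graph on the disjoint union of levels $l_1,\dots,l_{k+1}$. Level $l_i$ is the set of words $w_1\cdots w_k$ with $w_1,\dots,w_{k-i+1}\in\{1,2,3,4\}$ and $w_{k-i+2},\dots,w_k\in\{1,\dots,7\}$, so $|l_i|=4^{k-i+1}7^{i-1}$. For $u\in l_i$, $v\in l_{i+1}$ ($1\le i\le k$) and $p=k-i+1$, the pair $uv$ is an edge iff $u_t=v_t$ for all $t\neq p$ and $c_{u_p}m_{v_p}$ is an edge of $D$. There are no other edges. Maximum degree is $6$. $E(A,B)$ denotes the set of edges with one endpoint in $A$ and the other in $B$. *)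

From HB Require Import structures.
From mathcomp Require Import all_boot all_order all_algebra.
Set Implicit Arguments. Unset Strict Implicit. Unset Printing Implicit Defensive.
Import Order.TTheory GRing.Theory Num.Theory.

(* Conventions (0-based): product vertices m_1..m_7 are 0..6, output vertices
   c_1..c_4 are 0..3; level l_i (i = 1..k+1) is encoded by j = i-1 in 'I_(k+1);
   word positions 1..k are encoded by 0..k-1. *)

Definition Dedge (c m : nat) : bool :=
  match c with
  | 0 => m \in [:: 0; 3; 4; 6]
  | 1 => m \in [:: 2; 4]
  | 2 => m \in [:: 1; 3]
  | 3 => m \in [:: 0; 1; 2; 5]
  | _ => false
  end.

(* Ambient type: a level tag together with a word over {0..6}.  Only those
   pairs lying in some level are actual vertices of Dec_k C. *)
Definition vtx (k : nat) := ('I_k.+1 * {ffun 'I_k -> 'I_7})%type.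

Definition lev (k j : nat) : {set vtx k} :=
  [set v : vtx k | (v.1 == j :> nat) &&
     [forall t : 'I_k, ((t : nat) < k - j) ==> ((v.2 t : nat) < 4)]].

Definition Vset (k : nat) : {set vtx k} := \bigcup_(j < k.+1) lev k j.

(* Directed version of adjacency: u in l_(j+1), v in l_(j+2), they agree off
   position p = k - j (1-based), i.e. 0-based position k - j - 1, and
   c_{u_p} m_{v_p} is an edge of D. *)
Definition adj_up (k : nat) (u v : vtx k) : bool :=
  [exists j : 'I_k,
    [&& u \in lev k j, v \in lev k j.+1,
        [forall t : 'I_k, ((t : nat) != k - j.+1) ==> (u.2 t == v.2 t)] &
        [forall t : 'I_k, ((t : nat) == k - j.+1) ==> Dedge (u.2 t) (v.2 t)]]].

Arguments adj_up k u v : clear implicits.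

Definition decEdge (k : nat) (u v : vtx k) : bool := adj_up k u v || adj_up k v u.

Arguments decEdge k u v : clear implicits.

(* E(S, V \ S) ∩ E(l_(j+1), l_(j+2)): each undirected edge between the two
   consecutive levels is represented once, as the pair (u, v) with u in the
   lower-indexed level. *)
Definition cross_edges (k j : nat) (S : {set vtx k}) : {set vtx k * vtx k} :=
  [set e : vtx k * vtx k |
    [&& e.1 \in lev k j, e.2 \in lev k j.+1, decEdge k e.1 e.2 &
        (e.1 \in S) != (e.2 \in S)]].

Arguments cross_edges k j S : clear implicits.

Definition sigma (k j : nat) (S : {set vtx k}) : rat :=
  (#|S :&: lev k j|%:R / #|lev k j|%:R)%R.

Arguments sigma k j S : clear implicits.

From HB Require Import structures.
From mathcomp Require Import all_boot all_order all_algebra.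
From mathcomp Require Import zify ring lra.
Import Order.TTheory GRing.Theory Num.Theory.
Set Implicit Arguments. Unset Strict Implicit. Unset Printing Implicit Defensive.

(* Fix j < k and the pivot position p = k - j - 1 (0-based), the only position
   at which adjacent words of l_(j+1) and l_(j+2) may differ.  Overwriting the
   pivot letter of u in l_(j+1) by a in {0..3}, resp. m in {0..6}, gives the
   vertices [lower u a] of l_(j+1) and [upper u m] of l_(j+2); together they form
   the fibre of u, which contains a copy of the connected graph D.  We count the
   pairs (u, m) with u in l_(j+1) and m in {0..6}:
   - 7 |S ∩ l_(j+1)| of them have u in S, and 4 |S ∩ l_(j+2)| have [upper u m]
     in S (the pivot letter of u ranges over 4 values);
   - if S separates u from [upper u m], connectivity of D yields a crossing edge
     inside the fibre of u, and each crossing edge arises from at most 49 pairs.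
   Hence |7 |S ∩ l_(j+1)| - 4 |S ∩ l_(j+2)|| <= 49 |E(S, V \ S) ∩ E(l_(j+1), l_(j+2))|.
   For S = V the same count gives 4 |l_(j+2)| = 7 |l_(j+1)|, and an elementary
   computation in an ordered field turns the count into the claimed bound. *)

(* D is connected: a labelling of its output and product vertices that agrees
   across every edge of D is constant. *)
Lemma Dedge_connected (T : Type) (fX fY : nat -> T) :
  (forall c m, c < 4 -> m < 7 -> Dedge c m -> fX c = fY m) ->
  forall c m, c < 4 -> m < 7 -> fX c = fY m.
Proof.
move=> agree.
have e00 := agree 0 0 isT isT isT. have e30 := agree 3 0 isT isT isT.
have e21 := agree 2 1 isT isT isT. have e31 := agree 3 1 isT isT isT.
have e12 := agree 1 2 isT isT isT. have e32 := agree 3 2 isT isT isT.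
have e03 := agree 0 3 isT isT isT. have e23 := agree 2 3 isT isT isT.
have e04 := agree 0 4 isT isT isT. have e14 := agree 1 4 isT isT isT.
have e35 := agree 3 5 isT isT isT. have e06 := agree 0 6 isT isT isT.
have outputs : forall c, c < 4 -> fX c = fX 0.
  by move=> c; do 4?[case: c => [|c]] => //= _; congruence.
have products : forall m, m < 7 -> fY m = fX 0.
  by move=> m; do 7?[case: m => [|m]] => //= _; congruence.
by move=> c m hc hm; rewrite outputs // products.
Qed.

Section Fibre.
Variables (k j : nat).
Hypothesis hj : j < k.

Lemma pivot_lt : k - j.+1 < k. Proof. lia. Qed.
Definition pivot : 'I_k := Ordinal pivot_lt.

Lemma eq_pivot (t : 'I_k) : (t == pivot) = ((t : nat) == k - j.+1).
Proof. by []. Qed.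

Definition set_pivot (w : {ffun 'I_k -> 'I_7}) (a : 'I_7) : {ffun 'I_k -> 'I_7} :=
  [ffun t : 'I_k => if t == pivot then a else w t].

Lemma set_pivot_at w a : set_pivot w a pivot = a.
Proof. by rewrite ffunE eqxx. Qed.

Lemma set_pivot_off w a t : t != pivot -> set_pivot w a t = w t.
Proof. by rewrite ffunE => /negbTE ->. Qed.

Lemma set_pivotK w a b : set_pivot (set_pivot w a) b = set_pivot w b.
Proof. by apply/ffunP => t; rewrite !ffunE; case: (t == pivot). Qed.

Lemma set_pivot_id w : set_pivot w (w pivot) = w.
Proof. by apply/ffunP => t; rewrite !ffunE; case: eqP => [->|]. Qed.

Definition lower (u : vtx k) (a : 'I_7) : vtx k := (inord j, set_pivot u.2 a).
Definition upper (u : vtx k) (m : 'I_7) : vtx k := (inord j.+1, set_pivot u.2 m).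

Lemma lower_lower u a b : lower (lower u a) b = lower u b.
Proof. by rewrite /lower /= set_pivotK. Qed.
Lemma lower_upper u m a : lower (upper u m) a = lower u a.
Proof. by rewrite /lower /upper /= set_pivotK. Qed.
Lemma upper_lower u a m : upper (lower u a) m = upper u m.
Proof. by rewrite /lower /upper /= set_pivotK. Qed.

(* The letters strictly before the pivot are output letters (< 4); this is
   the membership condition shared by both levels, pivot excluded. *)
Definition out_prefix (w : {ffun 'I_k -> 'I_7}) : Prop :=
  forall t : 'I_k, (t : nat) < k - j.+1 -> (w t : nat) < 4.

Lemma lev_tag u i : u \in lev k i -> i < k.+1 -> u.1 = inord i.
Proof. by rewrite inE => /andP[/eqP tag _] hi; apply/val_inj; rewrite /= inordK. Qed.

Lemma lev_out_prefix u : u \in lev k j -> out_prefix u.2.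
Proof.
rewrite inE => /andP[_ /forallP low] t ht.
by have := low t; rewrite (_ : t < k - j); last lia.
Qed.

Lemma lev1_out_prefix u : u \in lev k j.+1 -> out_prefix u.2.
Proof. by rewrite inE => /andP[_ /forallP low] t ht; have := low t; rewrite ht. Qed.

Lemma lev_pivot u : u \in lev k j -> (u.2 pivot : nat) < 4.
Proof.
rewrite inE => /andP[_ /forallP low].
by have := low pivot; rewrite /= (_ : k - j.+1 < k - j); last lia.
Qed.

Lemma lower_lev u (a : 'I_7) : out_prefix u.2 -> (a : nat) < 4 -> lower u a \in lev k j.
Proof.
move=> hw ha; rewrite inE /= inordK; last lia.
rewrite eqxx /=; apply/forallP => t; apply/implyP => ht; rewrite ffunE eq_pivot.
by case: eqP => [//|hne]; apply: hw; lia.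
Qed.

Lemma upper_lev u (m : 'I_7) : out_prefix u.2 -> upper u m \in lev k j.+1.
Proof.
move=> hw; rewrite inE /= inordK; last lia.
rewrite eqxx /=; apply/forallP => t; apply/implyP => ht; rewrite ffunE eq_pivot.
by case: eqP => [hne|hne]; [lia | apply: hw].
Qed.

Lemma lower_self u : u \in lev k j -> lower u (u.2 pivot) = u.
Proof. by case: u => u1 u2 hu; rewrite /lower set_pivot_id -(lev_tag hu) //; lia. Qed.

Lemma upper_self u : u \in lev k j.+1 -> upper u (u.2 pivot) = u.
Proof. by case: u => u1 u2 hu; rewrite /upper set_pivot_id -(lev_tag hu) //; lia. Qed.

Lemma fibre_edge u (c m : 'I_7) : out_prefix u.2 -> (c : nat) < 4 -> Dedge c m ->
  decEdge k (lower u c) (upper u m).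
Proof.
move=> hw hc hd; apply/orP; left; apply/existsP; exists (Ordinal hj) => /=.
apply/and4P; split; [exact: lower_lev | exact: upper_lev | |].
- by apply/forallP => t; apply/implyP => ht; rewrite !set_pivot_off.
- apply/forallP => t; apply/implyP => /eqP ht.
  have -> : t = pivot by apply/val_inj.
  by rewrite !set_pivot_at.
Qed.

Variable S : {set vtx k}.

(* If S separates u from [upper u m], then, D being connected, some edge of
   the fibre of u crosses from S to its complement. *)
Lemma fibre_crossing u m : u \in lev k j -> (u \in S) != (upper u m \in S) ->
  [exists c : 'I_7, exists m' : 'I_7, (lower u c, upper u m') \in cross_edges k j S].
Proof.
move=> hu; apply: contraR => no_cross; apply/eqP.
have hw := lev_out_prefix hu.
pose fX n := lower u (inord n) \in S.
pose fY n := upper u (inord n) \in S.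
have agree c m' : c < 4 -> m' < 7 -> Dedge c m' -> fX c = fY m'.
  move=> hc hm hd; apply/eqP/negPn/negP => hdiff; move/negP: no_cross; apply.
  apply/existsP; exists (inord c); apply/existsP; exists (inord m').
  have hc' : (inord c : 'I_7) < 4 by rewrite inordK //; lia.
  rewrite inE /= lower_lev // upper_lev // fibre_edge //.
  by rewrite !inordK //; lia.
have := Dedge_connected agree (lev_pivot hu) (ltn_ord m).
by rewrite /fX /fY !inord_val lower_self.
Qed.

Definition lowS_pairs := [set x : vtx k * 'I_7 | x.1 \in S :&: lev k j].
Definition upS_pairs :=
  [set x : vtx k * 'I_7 | (x.1 \in lev k j) && (upper x.1 x.2 \in S)].
Definition split_pairs := [set x : vtx k * 'I_7 |
  (x.1 \in lev k j) && ((x.1 \in S) != (upper x.1 x.2 \in S))].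

Lemma card_lowS_pairs : #|lowS_pairs| = 7 * #|S :&: lev k j|.
Proof.
have -> : lowS_pairs = setX (S :&: lev k j) setT by apply/setP => x; rewrite !inE andbT.
by rewrite cardsX cardsT card_ord mulnC.
Qed.

Lemma card_output_letters : #|[set a : 'I_7 | a < 4]| = 4.
Proof. by rewrite cardsE -sum1_card big_mkcond /= !big_ord_recr big_ord0. Qed.

Definition upper_pair (x : vtx k * 'I_7) : vtx k * 'I_7 := (upper x.1 x.2, x.1.2 pivot).

Lemma upper_pair_inj : {in upS_pairs &, injective upper_pair}.
Proof.
move=> [u m] [u' m']; rewrite ![_ \in upS_pairs]inE /= => /andP[hu _] /andP[hu' _] [eq_up eq_piv].
have eq_m : m = m'.
  by move: (congr1 (fun w : {ffun 'I_k -> 'I_7} => w pivot) eq_up); rewrite /= !set_pivot_at.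
have : lower (upper u m) (u.2 pivot) = lower (upper u' m') (u'.2 pivot).
  by rewrite /upper eq_up eq_piv.
by rewrite !lower_upper !lower_self // => ->; rewrite eq_m.
Qed.

Lemma upper_pair_image :
  upper_pair @: upS_pairs = setX (S :&: lev k j.+1) [set a : 'I_7 | a < 4].
Proof.
apply/setP => -[v a]; rewrite in_setX in_setI [a \in _]inE /=; apply/imsetP/idP.
- move=> [[u m]]; rewrite inE /= => /andP[hu huS] [-> ->].
  by rewrite huS lev_pivot // andbT upper_lev //; exact: lev_out_prefix.
- move=> /andP[/andP[hvS hv] ha]; exists (lower v a, v.2 pivot).
    rewrite [_ \in upS_pairs]inE /= upper_lower upper_self // hvS andbT.
    by apply: lower_lev => //; exact: lev1_out_prefix.
  by rewrite /upper_pair /= upper_lower upper_self // set_pivot_at.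
Qed.

Lemma card_upS_pairs : #|upS_pairs| = 4 * #|S :&: lev k j.+1|.
Proof.
by rewrite -(card_in_imset upper_pair_inj) upper_pair_image cardsX card_output_letters mulnC.
Qed.

(* Each crossing edge accounts for at most 7 * 7 split pairs. *)
Lemma card_split_pairs : #|split_pairs| <= 49 * #|cross_edges k j S|.
Proof.
pose g (y : (vtx k * vtx k) * ('I_7 * 'I_7)) := (lower y.1.1 y.2.1, y.2.2).
have cover : split_pairs \subset g @: setX (cross_edges k j S) setT.
  apply/subsetP => -[u m]; rewrite inE /= => /andP[hu hne].
  have /existsP[c /existsP[m' cross]] := fibre_crossing hu hne.
  apply/imsetP; exists ((lower u c, upper u m'), (u.2 pivot, m)).
    by rewrite in_setX cross in_setT.
  by rewrite /g /= lower_lower lower_self.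
apply: (leq_trans (subset_leq_card cover)); apply: (leq_trans (leq_imset_card _ _)).
by rewrite cardsX cardsT card_prod card_ord mulnC.
Qed.

Lemma count_balance :
  7 * #|S :&: lev k j| <= 4 * #|S :&: lev k j.+1| + 49 * #|cross_edges k j S|
  /\ 4 * #|S :&: lev k j.+1| <= 7 * #|S :&: lev k j| + 49 * #|cross_edges k j S|.
Proof.
have lowS_cover : lowS_pairs \subset upS_pairs :|: split_pairs.
  apply/subsetP => -[u m]; rewrite in_setU [_ \in lowS_pairs]inE in_setI.
  rewrite [_ \in upS_pairs]inE [_ \in split_pairs]inE /= => /andP[hS hu].
  by rewrite hu hS /=; case: (upper u m \in S).
have upS_cover : upS_pairs \subset lowS_pairs :|: split_pairs.
  apply/subsetP => -[u m]; rewrite in_setU [_ \in lowS_pairs]inE in_setI.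
  rewrite [_ \in upS_pairs]inE [_ \in split_pairs]inE /= => /andP[hu hS].
  by rewrite hu hS /=; case: (u \in S).
have c1 := subset_leq_card lowS_cover; have c2 := subset_leq_card upS_cover.
rewrite cardsU in c1; rewrite cardsU in c2.
rewrite -card_lowS_pairs -card_upS_pairs; have := card_split_pairs; split; lia.
Qed.

End Fibre.

(* Taking S = V in the count: 4 |l_(j+2)| = 7 |l_(j+1)|. *)
Lemma card_lev_succ k j : j < k -> 4 * #|lev k j.+1| = 7 * #|lev k j|.
Proof.
move=> hj; have := card_lowS_pairs j [set: vtx k]; have := card_upS_pairs hj [set: vtx k].
rewrite !setTI => <- <-.
by apply: eq_card => -[u m]; rewrite !inE andbT.
Qed.

Section DensityGap.
Local Open Scope ring_scope.

Lemma density_gap_scaled (R : realFieldType) (L L' s s' : nat) :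
  (4 * L' = 7 * L)%N -> (0 < L)%N ->
  (s%:R / L%:R - s'%:R / L'%:R) * L%:R = (7 * s%:R - 4 * s'%:R) / 7 :> R.
Proof.
move=> hL L0.
have L'r : (L'%:R : R) = 7 * L%:R / 4.
  have h4 : (4 * L'%:R : R) = 7 * L%:R by rewrite -!natrM hL.
  by rewrite -h4; field.
rewrite L'r; field.
by rewrite pnatr_eq0 -lt0n L0.
Qed.

Lemma density_gap_bound (R : realFieldType) (L L' s s' c : nat) :
  (4 * L' = 7 * L)%N ->
  (7 * s <= 4 * s' + 49 * c)%N -> (4 * s' <= 7 * s + 49 * c)%N ->
  1 / 42 * 6 * `|s%:R / L%:R - s'%:R / L'%:R| * L%:R <= c%:R :> R.
Proof.
move=> hL h1 h2.
have [->|L0] := posnP L; first by rewrite mulr0.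
rewrite -mulrA -[X in _ * (_ * X) <= _]normr_nat -normrM.
rewrite density_gap_scaled // normrM normfV normr_nat.
have h1' : 7 * s%:R <= 4 * s'%:R + 49 * c%:R :> R by rewrite -!natrM -natrD ler_nat.
have h2' : 4 * s'%:R <= 7 * s%:R + 49 * c%:R :> R by rewrite -!natrM -natrD ler_nat.
have : `|7 * s%:R - 4 * s'%:R| <= 49 * c%:R :> R.
  by rewrite ler_norml; apply/andP; split; lra.
lra.
Qed.

End DensityGap.

Theorem claim4 :
  exists c' : rat, (0 < c')%R /\
    forall (k : nat), 1 <= k ->
    forall (S : {set vtx k}), S \subset Vset k ->
    forall (j : nat), j < k ->
      (c' * 6%:R * `|sigma k j S - sigma k j.+1 S| * (#|lev k j|)%:R
         <= (#|cross_edges k j S|)%:R)%R.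
Proof.
exists (1 / 42)%R; split; first by rewrite div1r invr_gt0 ltr0n.
move=> k _ S _ j hj.
have [low_bound up_bound] := count_balance hj S.
exact: density_gap_bound (card_lev_succ hj) low_bound up_bound.
Qed.
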